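(* Let $q$ be a prime power and use the setting of the context. Let $\mathcal Q\in\mathcal H$ be a hyperbolic quadric not containing the point $T$, and let $\mathcal R$ be one of its two reguli. Then no two distinct lines of $\mathcal R$ lie in the same $C$-orbit.
   Context: Points of ${\rm PG}(3,q)$ are $\langle(x_1,x_2,x_3,x_4)\rangle$; $\pi$ is the plane $x_4=0$ and $T=\langle(0,0,0,1)\rangle$. Let $\sigma\in{\rm GL}(3,q)$ be a Singer cycle (element of order $q^3-1$) and let $C$ be the group of projectivities induced by the matrices $\begin{pmatrix} A&0\\0&1\end{pmatrix}$, $A\in\langle\sigma\rangle$ (order $q^3-1$). The group $C$ induces on $\pi$ a Singer cyclic group $C_1$ of order $q^2+q+1$. Embedding $\pi$ in ${\rm PG}(2,q^3)$, $C_1$ fixes a unique triangle $\Delta$ with vertices outside ${\rm PG}(2,q)$; the circumscribed bundle $\mathcal B$ is the set of non-degenerate conics of $\pi$ whose extensions over ${\rm GF}(q^3)$ contain the vertices of $\Delta$. $\mathcal H$ is the set of hyperbolic quadrics of ${\rm PG}(3,q)$ meeting $\pi$ in a conic of $\mathcal B$. A regulus of a hyperbolic quadric is one of its two families of $q+1$ pairwise skew lines. *)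

From HB Require Import structures.
From mathcomp Require Import all_boot all_order all_algebra all_field.
Set Implicit Arguments. Unset Strict Implicit. Unset Printing Implicit Defensive.
Import GRing.Theory.
Local Open Scope ring_scope.

(* Conventions: vectors are row vectors 'rV_n; a matrix g acts on points of
   PG(n-1, K) as a column-vector projectivity <x> |-> <g x>, i.e. on row
   vectors as x |-> x *m g^T.  A subspace (line) is the row space of a matrix. *)

Definition qf (K : nzRingType) (n : nat) (A : 'M[K]_n) (x : 'rV[K]_n) : K :=
  (x *m A *m x^T) 0 0.

(* A and B define the same quadratic polynomial (identical coefficients). *)
Definition qf_equiv (K : nzRingType) (n : nat) (A B : 'M[K]_n) : Prop :=
  A + A^T = B + B^T /\ (forall i, A i i = B i i).

(* Canonical forms: x0 x1 + x2 x3 (hyperbolic quadric), x0 x2 - x1^2 (conic). *)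
Definition hypE (K : nzRingType) : 'M[K]_4 :=
  delta_mx (0 : 'I_4) (1 : 'I_4) + delta_mx (2 : 'I_4) (3 : 'I_4).
Definition conicE (K : nzRingType) : 'M[K]_3 :=
  delta_mx (0 : 'I_3) (2 : 'I_3) - delta_mx (1 : 'I_3) (1 : 'I_3).

Definition hyperbolic_form (K : fieldType) (A : 'M[K]_4) : Prop :=
  exists (M : 'M[K]_4) (c : K),
    [/\ M \in unitmx, c != 0 & qf_equiv A (c *: (M *m hypE K *m M^T))].

Definition nondeg_conic_form (K : fieldType) (B : 'M[K]_3) : Prop :=
  exists (N : 'M[K]_3) (c : K),
    [/\ N \in unitmx, c != 0 & qf_equiv B (c *: (N *m conicE K *m N^T))].

Definition singer_cycle (F : finFieldType) (s : 'M[F]_3) : Prop :=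
  [/\ s \in unitmx, s ^+ (#|F| ^ 3 - 1) = 1
    & forall k, (0 < k < #|F| ^ 3 - 1)%N -> s ^+ k != 1].

Definition ext4 (K : nzRingType) (A : 'M[K]_3) : 'M[K]_4 :=
  block_mx A 0 0 (1%:M : 'M[K]_1).

Definition restr_pi (K : nzRingType) (A : 'M[K]_4) : 'M[K]_3 :=
  \matrix_(i < 3, j < 3) A (widen_ord (leqnSn 3) i) (widen_ord (leqnSn 3) j).

Definition ptT (K : nzRingType) : 'rV[K]_4 := \row_(i < 4) (i == ord_max)%:R.

Definition extL (F : fieldType) (L : fieldExtType F) (m n : nat)
  (A : 'M[F]_(m, n)) : 'M[L]_(m, n) := map_mx (fun a : F => a%:A) A.

(* <v> (v over L) is a point of PG(2,L) fixed by the projectivity induced by s,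
   i.e. a vertex of the triangle Delta fixed by C_1 = <s>. *)
Definition fixed_pt (F : fieldType) (L : fieldExtType F) (s : 'M[F]_3)
  (v : 'rV[L]_3) : Prop :=
  v != 0 /\ exists lam : L, v *m (extL _ s)^T = lam *: v.

Definition in_bundle (F : fieldType) (L : fieldExtType F) (s : 'M[F]_3)
  (B : 'M[F]_3) : Prop :=
  nondeg_conic_form B /\
  (forall v : 'rV[L]_3, @fixed_pt F L s v -> qf (extL L B) v = 0).

Definition in_H (F : fieldType) (L : fieldExtType F) (s : 'M[F]_3)
  (A : 'M[F]_4) : Prop :=
  hyperbolic_form A /\ in_bundle L s (restr_pi A).

Definition is_line (K : fieldType) (l : 'M[K]_(2, 4)) : Prop := \rank l = 2%N.

Definition line_on (K : fieldType) (A : 'M[K]_4) (l : 'M[K]_(2, 4)) : Prop :=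
  forall v : 'rV[K]_4, (v <= l)%MS -> qf A v = 0.

Definition skew (K : fieldType) (l1 l2 : 'M[K]_(2, 4)) : Prop :=
  \rank (l1 :&: l2)%MS = 0%N.

Definition regulus (F : finFieldType) (A : 'M[F]_4)
  (R : 'I_(#|F|.+1) -> 'M[F]_(2, 4)) : Prop :=
  (forall i, is_line (R i) /\ line_on A (R i)) /\
  (forall i j, i != j -> skew (R i) (R j)).

Definition same_C_orbit (K : fieldType) (s : 'M[K]_3) (l1 l2 : 'M[K]_(2, 4)) : Prop :=
  exists k : nat, (l1 *m (ext4 (s ^+ k))^T == l2)%MS.

(* Let l be a line of the regulus and suppose that l g, with g = diag(s^k, 1),
   is another one; the two lines are skew, so together they span the space.  As g
   fixes pi and two lines of pi meet, l is not contained in pi, hence is spanned by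
   points (p, 0) and (u, 1) with p != 0.  Over GF(q^3) the Singer cycle
   diagonalises.  In coordinates relative to the vertices of Delta and to T, g acts
   as diag(m, 1), the form of the quadric has no square terms x_i^2 for i < 3 (its
   conic passes through the vertices) and its x_4^2 coefficient is Q(T) != 0.  The
   six conditions saying that l and l g lie on the quadric then give, by an explicit
   polynomial identity, p_1 p_2 p_3 det(p, p m, u m - u) Q(T) = 0.  This is absurd:
   the determinant is nonzero since l and l g span the space, and no coordinate p_i
   vanishes since GF(q)[s] is a field, which makes p a cyclic vector of s. *)

From HB Require Import structures.
From mathcomp Require Import all_boot all_order all_algebra all_field.
From mathcomp Require Import ring.
Set Implicit Arguments. Unset Strict Implicit. Unset Printing Implicit Defensive.
Import GRing.Theory.
Local Open Scope ring_scope.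

Section Coordinates.
Variable K : comNzRingType.

Definition qf4 (a : 'M[K]_4) (x0 x1 x2 x3 : K) :=
  x0 * a 0 0 * x0 + x0 * a 0 1 * x1 + x0 * a 0 2 * x2 + x0 * a 0 3 * x3 +
  x1 * a 1 0 * x0 + x1 * a 1 1 * x1 + x1 * a 1 2 * x2 + x1 * a 1 3 * x3 +
  x2 * a 2 0 * x0 + x2 * a 2 1 * x1 + x2 * a 2 2 * x2 + x2 * a 2 3 * x3 +
  x3 * a 3 0 * x0 + x3 * a 3 1 * x1 + x3 * a 3 2 * x2 + x3 * a 3 3 * x3.

Definition det3 (a1 a2 a3 b1 b2 b3 c1 c2 c3 : K) :=
  a1 * (b2 * c3 - b3 * c2) - a2 * (b1 * c3 - b3 * c1) + a3 * (b1 * c2 - b2 * c1).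

Lemma big_ord3 (f : 'I_3 -> K) : \sum_i f i = f 0 + f 1 + f 2.
Proof.
by rewrite !big_ord_recr big_ord0 /= add0r; congr (f _ + f _ + f _); apply: val_inj.
Qed.

Lemma big_ord4 (f : 'I_4 -> K) : \sum_i f i = f 0 + f 1 + f 2 + f 3.
Proof.
by rewrite !big_ord_recr big_ord0 /= add0r; congr (f _ + f _ + f _ + f _); apply: val_inj.
Qed.

Lemma qf4E (a : 'M[K]_4) (x : 'rV[K]_4) :
  qf a x = qf4 a (x 0 0) (x 0 1) (x 0 2) (x 0 3).
Proof. by rewrite /qf !mxE big_ord4 !mxE !big_ord4 /qf4; ring. Qed.

Lemma qf_row_mxE (a : 'M[K]_4) (x : 'rV[K]_3) (c : 'rV[K]_1) :
  qf a (row_mx x c) = qf4 a (x 0 0) (x 0 1) (x 0 2) (c 0 0).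
Proof.
have rowE (i : 'I_3) (j : 'I_4) : val j = val i -> (row_mx x c : 'rV_4) 0 j = x 0 i.
  move=> eji; rewrite (_ : j = lshift 1 i); first exact: row_mxEl.
  by apply: val_inj.
have row3 : (row_mx x c : 'rV_4) 0 3 = c 0 0.
  by rewrite (_ : (3 : 'I_4) = rshift 3 (0 : 'I_1)); [exact: row_mxEr | apply/eqP].
by rewrite qf4E (rowE 0) // (rowE 1) // (rowE 2) // row3.
Qed.

Lemma det3E (M : 'M[K]_3) :
  \det M = det3 (M 0 0) (M 0 1) (M 0 2) (M 1 0) (M 1 1) (M 1 2) (M 2 0) (M 2 1) (M 2 2).
Proof.
pose g (i j : nat) := M (inord i) (inord j).
have -> : M = \matrix_(i, j) g i j by apply/matrixP => i j; rewrite mxE /g !inord_val.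
rewrite (expand_det_row _ 0) big_ord3 /cofactor.
rewrite !(expand_det_row _ 0) !big_ord_recr big_ord0 /= /cofactor !det_mx11 !mxE /=.
rewrite !big_ord0 /bump /=.
change (1 %% 3)%N with 1%N; change ((1 + 1) %% 3)%N with 2%N.
by rewrite /det3 /= ?add0n ?addn0 ?expr0 ?expr1; ring.
Qed.

Lemma det_col_mx3 (x y z : 'rV[K]_3) :
  \det (col_mx (col_mx x y) z : 'M_3) =
  det3 (x 0 0) (x 0 1) (x 0 2) (y 0 0) (y 0 1) (y 0 2) (z 0 0) (z 0 1) (z 0 2).
Proof.
have colE (j : 'I_3) :
    [/\ (col_mx (col_mx x y) z : 'M_3) 0 j = x 0 j,
        (col_mx (col_mx x y) z : 'M_3) 1 j = y 0 j &
        (col_mx (col_mx x y) z : 'M_3) 2 j = z 0 j].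
  split.
  - rewrite (_ : (0 : 'I_3) = lshift 1 (lshift 1 (0 : 'I_1))); last by apply/eqP.
    exact: etrans (col_mxEu (col_mx x y) z _ j) (col_mxEu x y _ j).
  - rewrite (_ : (1 : 'I_3) = lshift 1 (rshift 1 (0 : 'I_1))); last by apply/eqP.
    exact: etrans (col_mxEu (col_mx x y) z _ j) (col_mxEd x y _ j).
  - rewrite (_ : (2 : 'I_3) = rshift (1 + 1) (0 : 'I_1)); last by apply/eqP.
    exact: (col_mxEd (col_mx x y) z _ j).
have [x0 y0 z0] := colE 0; have [x1 y1 z1] := colE 1; have [x2 y2 z2] := colE 2.
by rewrite det3E x0 y0 z0 x1 y1 z1 x2 y2 z2.
Qed.

(* The coefficients c1, c4, r1, r2, r3 of the combination below were found by
   linear elimination over Z[p, u, m, a]. *)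
Lemma qf4_certificate (a : 'M[K]_4) (p1 p2 p3 u1 u2 u3 m1 m2 m3 : K) :
  a 0 0 = 0 -> a 1 1 = 0 -> a 2 2 = 0 ->
  qf4 a p1 p2 p3 0 = 0 -> qf4 a u1 u2 u3 1 = 0 ->
  qf4 a (p1 + u1) (p2 + u2) (p3 + u3) 1 = 0 ->
  qf4 a (p1 * m1) (p2 * m2) (p3 * m3) 0 = 0 ->
  qf4 a (u1 * m1) (u2 * m2) (u3 * m3) 1 = 0 ->
  qf4 a ((p1 + u1) * m1) ((p2 + u2) * m2) ((p3 + u3) * m3) 1 = 0 ->
  p1 * p2 * p3 * det3 p1 p2 p3 (p1 * m1) (p2 * m2) (p3 * m3)
                   (u1 * m1 - u1) (u2 * m2 - u2) (u3 * m3 - u3) * a 3 3 = 0.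
Proof.
move=> a00 a11 a22.
set e1 := qf4 a p1 p2 p3 0; set e2 := qf4 a u1 u2 u3 1.
set e3 := qf4 a (p1 + u1) _ _ 1; set e4 := qf4 a (p1 * m1) _ _ 0.
set e5 := qf4 a (u1 * m1) _ _ 1; set e6 := qf4 a ((p1 + u1) * m1) _ _ 1.
move=> E1 E2 E3 E4 E5 E6.
set D := det3 p1 p2 p3 (p1 * m1) (p2 * m2) (p3 * m3) _ _ _.
pose r1 := det3 u1 u2 u3 (p1 * m1) (p2 * m2) (p3 * m3) (u1 * m1 - u1) (u2 * m2 - u2) (u3 * m3 - u3).
pose r2 := det3 p1 p2 p3 u1 u2 u3 (u1 * m1 - u1) (u2 * m2 - u2) (u3 * m3 - u3).
pose r3 := det3 p1 p2 p3 (p1 * m1) (p2 * m2) (p3 * m3) u1 u2 u3.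
pose c1 := - p2 * p3 * p3 * u1 * u1 * u2 * m2 * m3 + p2 * p3 * p3 * u1 * u1 * u2 * m1 * m2 * m3
  + p2 * p2 * p3 * u1 * u1 * u3 * m2 * m3 - p2 * p2 * p3 * u1 * u1 * u3 * m1 * m2 * m3
  + p1 * p3 * p3 * u1 * u2 * u2 * m1 * m3 - p1 * p3 * p3 * u1 * u2 * u2 * m1 * m2 * m3
  - p1 * p2 * p2 * u1 * u3 * u3 * m1 * m2 + p1 * p2 * p2 * u1 * u3 * u3 * m1 * m2 * m3
  - p1 * p1 * p3 * u2 * u2 * u3 * m1 * m3 + p1 * p1 * p3 * u2 * u2 * u3 * m1 * m2 * m3
  + p1 * p1 * p2 * u2 * u3 * u3 * m1 * m2 - p1 * p1 * p2 * u2 * u3 * u3 * m1 * m2 * m3.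
pose c4 := p2 * p3 * p3 * u1 * u1 * u2 - p2 * p3 * p3 * u1 * u1 * u2 * m1
  - p2 * p2 * p3 * u1 * u1 * u3 + p2 * p2 * p3 * u1 * u1 * u3 * m1
  - p1 * p3 * p3 * u1 * u2 * u2 + p1 * p3 * p3 * u1 * u2 * u2 * m2
  + p1 * p2 * p2 * u1 * u3 * u3 - p1 * p2 * p2 * u1 * u3 * u3 * m3
  + p1 * p1 * p3 * u2 * u2 * u3 - p1 * p1 * p3 * u2 * u2 * u3 * m2
  - p1 * p1 * p2 * u2 * u3 * u3 + p1 * p1 * p2 * u2 * u3 * u3 * m3.
have -> : p1 * p2 * p3 * D * a 3 3 =
    c1 * e1 + c4 * e4 - p1 * p2 * p3 *
      (r1 * (e3 - e1 - e2) + r2 * (e6 - e4 - e5) - (D + r3) * e2 + r3 * e5).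
  by rewrite /e1 /e2 /e3 /e4 /e5 /e6 /qf4 a00 a11 a22 /D /r1 /r2 /r3 /det3 /c1 /c4; ring.
by rewrite E1 E2 E3 E4 E5 E6; ring.
Qed.

Lemma qf_translate_certificate (a : 'M[K]_4) (p u m : 'rV[K]_3) :
  a 0 0 = 0 -> a 1 1 = 0 -> a 2 2 = 0 ->
  qf a (row_mx p 0) = 0 -> qf a (row_mx u 1) = 0 -> qf a (row_mx (p + u) 1) = 0 ->
  qf a (row_mx (p *m diag_mx m) 0) = 0 -> qf a (row_mx (u *m diag_mx m) 1) = 0 ->
  qf a (row_mx ((p + u) *m diag_mx m) 1) = 0 ->
  p 0 0 * p 0 1 * p 0 2 *
    \det (col_mx (col_mx p (p *m diag_mx m)) (u *m diag_mx m - u) : 'M_3) * a 3 3 = 0.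
Proof.
rewrite !qf_row_mxE det_col_mx3 !mul_mx_diag !mxE /=.
exact: qf4_certificate.
Qed.

Lemma qf_ptT (M : 'M[K]_4) : qf M (ptT K) = M 3 3.
Proof. by rewrite qf4E /qf4 !mxE /=; ring. Qed.

Lemma qf_row_mx01 (M : 'M[K]_4) : qf M (row_mx (0 : 'rV_3) 1) = M 3 3.
Proof. by rewrite qf_row_mxE /qf4 !mxE /=; ring. Qed.

Lemma qf_mulmx_tr n (B M : 'M[K]_n) x :
  qf (B *m M *m B^T) x = qf M (x *m B).
Proof. by rewrite /qf trmx_mul !mulmxA. Qed.

Lemma mulmx_tr_diag n (B M : 'M[K]_n) i :
  (B *m M *m B^T) i i = qf M (row i B).
Proof.
rewrite /qf -row_mul !mxE; apply: eq_bigr => j _; rewrite !mxE.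
by congr (_ * _); apply: eq_bigr => a _; rewrite !mxE.
Qed.

Lemma qf_row_mx0 n1 n2 (M : 'M[K]_(n1 + n2)) (v : 'rV[K]_n1) :
  qf M (row_mx v 0) = qf (ulsubmx M) v.
Proof.
rewrite /qf -{1}(submxK M) mul_row_block !mul0mx !addr0 tr_row_mx trmx0.
by rewrite mul_row_col mulmx0 addr0.
Qed.

End Coordinates.

Lemma qf_map (K K' : comNzRingType) (f : {rmorphism K -> K'}) n (M : 'M[K]_n) x :
  qf (map_mx f M) (map_mx f x) = f (qf M x).
Proof. by rewrite /qf map_trmx -!map_mxM mxE. Qed.

Lemma mulmx_invmx_conj (K : fieldType) n (P M N : 'M[K]_n) :
  P \in unitmx -> P *m M = N *m P -> M *m invmx P = invmx P *m N.
Proof. by move=> Pu PM; rewrite -[LHS](mulKmx Pu) (mulmxA P) PM -(mulmxA N) mulmxV ?mulmx1. Qed.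

Lemma col_row_mx0 (K : nzRingType) m1 m2 n1 n2 (a : 'M[K]_(m1, n1)) (b : 'M[K]_(m2, n1)) :
  col_mx (row_mx a (0 : 'M_(m1, n2))) (row_mx b 0) = row_mx (col_mx a b) 0.
Proof. by rewrite -[LHS]/(block_mx a 0 b 0) block_mxEh col_mx0. Qed.

Lemma det_translate_frame_neq0 (K : fieldType) (a b c d : 'rV[K]_3) :
  \rank (col_mx (col_mx (row_mx a 0) (row_mx b 1))
                (col_mx (row_mx c 0) (row_mx d 1)) : 'M_(2 + 2, 3 + 1)) = 4 ->
  \det (col_mx (col_mx a c) (d - b) : 'M_3) != 0.
Proof.
set W := col_mx _ _ => rW.
(* X is W with (d, 1) replaced by (d - b, 0), reordered to be block triangular. *)
set X := col_mx (col_mx (col_mx (row_mx a 0) (row_mx c 0)) (row_mx d 1 - row_mx b 1))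
                (row_mx b 1).
have := submx_refl X; rewrite {1}/X !col_mx_sub => /andP[/andP[/andP[Xa Xc] Xdb] Xb].
have WX : (W <= X)%MS.
  rewrite !col_mx_sub Xa Xb Xc -[row_mx d 1](subrK (row_mx b 1)) /=.
  exact: addmx_sub.
have Xu : X \in unitmx.
  rewrite -row_full_unit /row_full; apply/eqP/anti_leq.
  by rewrite rank_leq_col /= (leq_trans _ (mxrankS WX)) ?rW.
have XE : X = block_mx (col_mx (col_mx a c) (d - b)) 0 b 1.
  by rewrite /X opp_row_mx add_row_mx subrr !col_row_mx0.
by move: Xu; rewrite unitmxE XE det_lblock det1 mulr1 unitfE.
Qed.

Lemma mul_row_ext4_tr (K : comNzRingType) m (x : 'M[K]_(m, 3)) (c : 'M[K]_(m, 1)) g :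
  row_mx x c *m (ext4 g)^T = row_mx (x *m g^T) c.
Proof.
(* Rewriting fails on ext4 g, whose type 'M_4 is only convertible to 'M_(3 + 1). *)
have E : row_mx x c *m (block_mx g 0 0 1%:M)^T = row_mx (x *m g^T) c.
  by rewrite tr_block_mx !trmx0 trmx1 mul_row_block !mulmx0 addr0 add0r mulmx1.
exact: E.
Qed.

Lemma rsubmx_mul_ext4_tr (K : comNzRingType) m (l : 'M[K]_(m, 4)) (g : 'M[K]_3) :
  rsubmx (l *m (ext4 g)^T : 'M_(m, 3 + 1)) = rsubmx (l : 'M_(m, 3 + 1)).
Proof. by rewrite -{1}(hsubmxK (l : 'M_(m, 3 + 1))) mul_row_ext4_tr row_mxKr. Qed.

Section Lines.
Variable K : fieldType.

Lemma ord2_cases (i : 'I_2) : i = 0 \/ i = 1.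
Proof. by case: i => [[|[|]]] // ?; [left | right]; apply: val_inj. Qed.

Lemma skew_lines_rank n (l1 l2 : 'M[K]_(2, n)) :
  \rank l1 = 2 -> \rank l2 = 2 -> \rank (l1 :&: l2)%MS = 0 -> \rank (l1 + l2)%MS = 4.
Proof. by move=> r1 r2 r12; have := mxrank_sum_cap l1 l2; rewrite r1 r2 r12 addn0. Qed.

Lemma rank_adds_in_hyperplane n m1 m2 (l1 : 'M[K]_(m1, n + 1)) (l2 : 'M[K]_(m2, n + 1)) :
  rsubmx l1 = 0 -> rsubmx l2 = 0 -> (\rank (l1 + l2)%MS <= n)%N.
Proof.
pose H : 'M[K]_(n, n + 1) := row_mx 1%:M 0.
have subH m (l : 'M[K]_(m, n + 1)) : rsubmx l = 0 -> (l <= H)%MS.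
  move=> l_r0; rewrite -(hsubmxK l) l_r0.
  by rewrite (_ : row_mx _ 0 = lsubmx l *m H) ?submxMl // mul_mx_row mulmx1 mulmx0.
move=> /subH l1H /subH l2H.
by rewrite (leq_trans (mxrankS (_ : l1 + l2 <= H)%MS)) ?rank_leq_row // addsmx_sub l1H.
Qed.

Lemma line_basis_off_plane n (l : 'M[K]_(2, n + 1)) :
  \rank l = 2 -> rsubmx l != 0 ->
  exists p u : 'rV[K]_n, p != 0 /\ (col_mx (row_mx p 0) (row_mx u 1) :=: l)%MS.
Proof.
set c := rsubmx l => rl c_neq0.
have rc : \rank c = 1%N.
  by apply/eqP; rewrite eqn_leq rank_leq_col lt0n mxrank_eq0.
pose r := row_ebase c; pose B := (r 0 0)^-1 *: invmx (col_ebase c).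
have r00 : r 0 0 != 0 by rewrite -det_mx11 -unitfE -unitmxE row_ebase_unit.
have Bc : B *m c = pid_mx 1.
  rewrite /B -scalemxAl -[X in invmx _ *m X](mulmx_ebase c) !mulmxA.
  rewrite mulVmx ?col_ebase_unit // mul1mx rc.
  by rewrite [row_ebase c]mx11_scalar mul_mx_scalar scalerA mulVf ?scale1r.
have Bu : B \in unitmx.
  by rewrite unitmxZ ?unitmx_inv ?col_ebase_unit // unitfE invr_eq0.
set M := B *m l.
have Ml : (M :=: l)%MS by apply: eqmxMfull; rewrite row_full_unit.
have ME : M = row_mx (B *m lsubmx l) (pid_mx 1) by rewrite -Bc -mul_mx_row hsubmxK.
set p := row 1 (B *m lsubmx l); set u := row 0 (B *m lsubmx l).
have M1 : row 1 M = row_mx p 0.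
  by rewrite ME row_row_mx; congr row_mx; apply/rowP => j; rewrite !mxE andbF.
have M0 : row 0 M = row_mx u 1.
  by rewrite ME row_row_mx; congr row_mx; apply/rowP => j; rewrite !mxE ord1.
have eqM : (col_mx (row_mx p 0) (row_mx u 1) :=: M)%MS.
  apply/eqmxP/andP; split; first by rewrite col_mx_sub -M1 -M0 !row_sub.
  apply/row_subP => i; case: (ord2_cases i) => ->; rewrite ?M1 ?M0 -addsmxE.
    exact: addsmxSr.
  exact: addsmxSl.
exists p, u; split; last exact: eqmx_trans eqM Ml.
apply/eqP => p0; suff : (\rank M <= 1)%N by rewrite Ml rl.
apply: leq_trans (mxrankS (_ : (M <= row 0 M)%MS)) (rank_leq_row _).
apply/row_subP => i; case: (ord2_cases i) => ->; last by rewrite M1 p0 row_mx0 sub0mx.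
exact: submx_refl.
Qed.

End Lines.

Lemma trmxX (K : comNzRingType) n (M : 'M[K]_n.+1) k : (M ^+ k)^T = M^T ^+ k.
Proof.
elim: k => [|k IHk]; first by rewrite !expr0 trmx1.
by rewrite exprS exprSr -mulmxE trmx_mul IHk.
Qed.

Lemma singer_cycle_tr (F : finFieldType) (s : 'M[F]_3) :
  singer_cycle s -> singer_cycle s^T.
Proof.
case=> su sN sk; split; first by rewrite unitmx_tr.
  by rewrite -trmxX sN trmx1.
move=> k /sk; apply: contra => /eqP sk1.
by rewrite -(trmxK (s ^+ k)) trmxX sk1 trmx1.
Qed.

Section Singer.
Variables (F : finFieldType) (s : 'M[F]_3).
Hypothesis hs : singer_cycle s.
Local Notation N := (#|F| ^ 3 - 1)%N.

Lemma singer_order_succ : (#|F| ^ 3)%N = N.+1.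
Proof.
have q_gt1 : (1 < #|F|)%N := finNzRing_gt1 F.
by rewrite subn1 prednK // expn_gt0 ltnW.
Qed.

Lemma singer_expX_card : s ^+ (#|F| ^ 3) = s.
Proof. by case: hs => _ sN _; rewrite singer_order_succ exprSr sN mul1r. Qed.

Lemma singer_expX_unit k : s ^+ k \in unitmx.
Proof. by case: hs => su _ _; apply: unitrX. Qed.

Lemma singer_expX_inj (i j : 'I_N) : s ^+ i = s ^+ j -> i = j.
Proof.
wlog lt_ij : i j / (i < j)%N => [wlogH eij|].
  by case: (ltngtP i j) => [/wlogH->|/wlogH /(_ (esym eij))->|/val_inj].
move=> eij; have : s ^+ (j - i) != 1.
  case: hs => _ _; apply; rewrite subn_gt0 lt_ij.
  exact: leq_ltn_trans (leq_subr _ _) (ltn_ord j).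
move/negP; case; apply/eqP; apply: (mulrI (singer_expX_unit i)).
by rewrite -exprD (subnKC (ltnW lt_ij)) -eij mulr1.
Qed.

Lemma singer_expX_horner k : exists c : 'rV[F]_3, horner_mx s (rVpoly c) = s ^+ k.
Proof.
have cp_neq0 : char_poly s != 0 by rewrite -size_poly_eq0 size_char_poly.
have sz_mod : (size ('X^k %% char_poly s)%R <= 3)%N.
  by rewrite -ltnS -(size_char_poly s) ltn_modp.
exists (poly_rV ('X^k %% char_poly s)); rewrite poly_rV_K //.
have -> : s ^+ k = horner_mx s 'X^k by rewrite rmorphXn /= horner_mx_X.
by rewrite [in RHS](divp_eq 'X^k (char_poly s)) rmorphD rmorphM /= Cayley_Hamilton mulr0 add0r.
Qed.

(* The q^3 matrices horner_mx s (rVpoly c) include 0 and the q^3 - 1 distinct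
   powers of s, so they are exactly these and c |-> horner_mx s (rVpoly c) is
   injective. *)
Lemma horner_singer_unit (c : 'rV[F]_3) : c != 0 -> horner_mx s (rVpoly c) \in unitmx.
Proof.
pose h (c : 'rV[F]_3) := horner_mx s (rVpoly c).
pose pows := [set s ^+ val i | i : 'I_N].
have card_pows : #|pows| = N by rewrite card_imset ?card_ord // => i j /singer_expX_inj.
have pows_neq0 : 0 \notin pows.
  by apply/imsetP => -[i _ si0]; move: (singer_expX_unit i); rewrite -si0 unitr0.
have h0 : h 0 = 0 by rewrite /h linear0 rmorph0.
have pows_sub : 0 |: pows \subset h @: setT.
  apply/subsetP => x; rewrite in_setU1 => /predU1P[-> | /imsetP[i _ ->]].
    by rewrite -h0 imset_f.
  by have [c' <-] := singer_expX_horner i; apply: imset_f.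
have card_im : (#|h @: setT| <= N.+1)%N.
  by rewrite -singer_order_succ (leq_trans (leq_imset_card _ _)) // cardsT card_mx mul1n.
have im_h : h @: setT = 0 |: pows.
  by apply/esym/eqP; rewrite eqEcard pows_sub cardsU1 pows_neq0 card_pows add1n card_im.
have /imset_injP h_inj : #|h @: setT| == #|[set: 'rV[F]_3]|.
  by rewrite im_h cardsU1 pows_neq0 card_pows cardsT card_mx mul1n [X in _ == X]singer_order_succ.
move=> c_neq0; change (h c \in unitmx); have : h c \in 0 |: pows by rewrite -im_h imset_f.
rewrite in_setU1 => /predU1P[hc0 | /imsetP[i _ ->]]; last exact: singer_expX_unit.
by move: c_neq0; rewrite -h0 in hc0; rewrite (h_inj _ _ _ _ hc0) ?inE ?eqxx.
Qed.

Lemma singer_krylov_unit (x : 'rV[F]_3) : x != 0 -> \matrix_(i < 3) (x *m s ^+ i) \in unitmx.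
Proof.
move=> x_neq0; rewrite -row_free_unit -kermx_eq0; apply/rowV0P => c /sub_kermxP cK.
apply/eqP; apply: contraLR x_neq0 => /horner_singer_unit hu; rewrite negbK.
have -> : x = x *m horner_mx s (rVpoly c) *m invmx (horner_mx s (rVpoly c)) by rewrite mulmxK.
suff -> : x *m horner_mx s (rVpoly c) = c *m \matrix_(i < 3) (x *m s ^+ i) by rewrite cK !mul0mx.
rewrite [RHS]mulmx_sum_row [rVpoly c]poly_def linear_sum mulmx_sumr; apply: eq_bigr => i _.
by rewrite rowK linearZ /= rmorphXn /= horner_mx_X scalemxAr valK.
Qed.

End Singer.

Section Eigenbasis.
Variables (F : finFieldType) (L : fieldExtType F).

Lemma card_fieldExt : #|FinFieldExtType L| = (#|F| ^ \dim {: L})%N.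
Proof. by rewrite -(card_vspace (fullv : {vspace finvect_type L})) card_vspacef. Qed.

Lemma eigenbasis_of_expX_card n (M : 'M[F]_n.+1) :
  M ^+ (#|F| ^ \dim {: L}) = M ->
  exists P : 'M[L]_n.+1, exists D : 'rV[L]_n.+1,
    P \in unitmx /\ P *m map_mx (in_alg L) M = diag_mx D *m P.
Proof.
pose finL := FinFieldExtType L.
have splitX : 'X^(#|F| ^ \dim {: L}) - 'X = \prod_(x <- enum finL) ('X - x%:P) :> {poly L}.
  by rewrite big_enum /= -card_fieldExt; exact: (finField_genPoly finL).
move=> MX; have : diagonalizable (map_mx (in_alg L) M).
  apply/diagonalizableP; exists (enum finL); first exact: enum_uniq.
  rewrite -splitX mxminpoly_map.
  have -> : 'X^(#|F| ^ \dim {: L}) - 'X = map_poly (in_alg L) ('X^(#|F| ^ \dim {: L}) - 'X).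
    by rewrite rmorphB /= map_polyXn map_polyX.
  rewrite dvdp_map; apply: mxminpoly_min.
  by rewrite rmorphB rmorphXn /= horner_mx_X MX subrr.
case=> P Pu /diagonalizable_forPex[D hD]; exists P, D; split=> //.
exact: simmxPp (stablemx_unit _ Pu) hD.
Qed.

End Eigenbasis.

Lemma eigen_coord_neq0 (F K : fieldType) (f : {rmorphism F -> K}) n
    (M : 'M[F]_n.+1) (P : 'M[K]_n.+1) (D : 'rV[K]_n.+1) (x : 'rV[F]_n.+1) :
  P \in unitmx -> P *m map_mx f M = diag_mx D *m P ->
  \matrix_(i < n.+1) (x *m M ^+ i) \in unitmx ->
  forall i, (map_mx f x *m invmx P) 0 i != 0.
Proof.
move=> Pu hP Ku i; apply/eqP => xi0.
pose c := col i (invmx P).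
have eigc : map_mx f M *m c = D 0 i *: c.
  rewrite /c !colE mulmxA (mulmx_invmx_conj Pu hP) -mulmxA scalemxAr; congr (_ *m _).
  by apply/matrixP => a b; rewrite mul_diag_mx !mxE; case: eqP => [->|_]; rewrite ?mulr0.
have eigcX k : map_mx f (M ^+ k) *m c = D 0 i ^+ k *: c.
  elim: k => [|k IHk]; first by rewrite !expr0 map_mx1 mul1mx scale1r.
  by rewrite exprSr map_mxM -mulmxA eigc -scalemxAr IHk scalerA -exprS.
have xc : map_mx f x *m c = 0.
  apply/rowP => j; rewrite ord1 [RHS]mxE -xi0 !mxE.
  by apply: eq_bigr => k _; rewrite !mxE.
have Kc : map_mx f (\matrix_(k < n.+1) (x *m M ^+ k)) *m c = 0.
  apply/row_matrixP => k; rewrite row_mul row0 -map_row rowK map_mxM -mulmxA eigcX.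
  by rewrite -scalemxAr xc scaler0.
have c0 : c = 0.
  have Kfu : map_mx f (\matrix_(k < n.+1) (x *m M ^+ k)) \in unitmx by rewrite map_unitmx.
  by rewrite -(mulKmx Kfu c) Kc mulmx0.
have : delta_mx i 0 = 0 :> 'cV[K]_n.+1.
  by rewrite -(mulKVmx Pu (delta_mx i 0)) -colE -/c c0 mulmx0.
by move/matrixP/(_ i 0); rewrite !mxE !eqxx /= => /eqP; rewrite oner_eq0.
Qed.

Section EigenFrame.
Variables (F : finFieldType) (L : fieldExtType F) (s : 'M[F]_3) (A : 'M[F]_4).
Variables (P : 'M[L]_3) (D : 'rV[L]_3).
Hypotheses (Pu : P \in unitmx) (hP : P *m map_mx (in_alg L) s^T = diag_mx D *m P).
Hypotheses (hs : singer_cycle s) (hb : in_bundle L s (restr_pi A)) (hT : qf A (ptT F) != 0).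
Local Notation mapL := (map_mx (in_alg L)).

(* Coordinates over L relative to the rows of P (the vertices of Delta) and T. *)
Definition frame : 'M[L]_(3 + 1) := block_mx P 0 0 1%:M.

Definition to_frame m (v : 'M[F]_(m, 3 + 1)) : 'M[L]_(m, 3 + 1) :=
  mapL v *m block_mx (invmx P) 0 0 1%:M.

Definition frame_form : 'M[L]_(3 + 1) := frame *m mapL A *m frame^T.

Lemma qf_to_frame (v : 'rV[F]_4) : qf frame_form (to_frame v) = in_alg L (qf A v).
Proof.
rewrite /frame_form qf_mulmx_tr /to_frame /frame -mulmxA mulmx_block.
by rewrite !mulmx0 !mul0mx !addr0 add0r mulVmx // mul1mx -scalar_mx_block mulmx1 qf_map.
Qed.

Lemma to_frame_row_mx m (x : 'M[F]_(m, 3)) (c : 'M[F]_(m, 1)) :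
  to_frame (row_mx x c) = row_mx (mapL x *m invmx P) (mapL c).
Proof. by rewrite /to_frame map_row_mx mul_row_block !mulmx0 addr0 add0r mulmx1. Qed.

Lemma map_expX_conj k :
  mapL (s^T ^+ k) *m invmx P = invmx P *m diag_mx (\row_i D 0 i ^+ k).
Proof.
have sP := mulmx_invmx_conj Pu hP.
elim: k => [|k IHk].
  rewrite expr0 map_mx1 mul1mx -[LHS]mulmx1; congr (_ *m _).
  by apply/matrixP => i j; rewrite !mxE expr0.
rewrite exprS map_mxM -mulmxA IHk mulmxA sP -mulmxA; congr (_ *m _).
by apply/matrixP => i j; rewrite mul_diag_mx !mxE; case: eqP => [->|]; rewrite ?mulr0 ?exprS.
Qed.

Lemma to_frame_translate m (x : 'M[F]_(m, 3)) (c : 'M[F]_(m, 1)) k :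
  to_frame (row_mx x c *m (ext4 (s ^+ k))^T) =
  row_mx (mapL x *m invmx P *m diag_mx (\row_i D 0 i ^+ k)) (mapL c).
Proof.
by rewrite mul_row_ext4_tr to_frame_row_mx map_mxM trmxX -mulmxA map_expX_conj mulmxA.
Qed.

Lemma frame_form_diag (j : 'I_4) : (j < 3)%N -> frame_form j j = 0.
Proof.
move=> lt_j3; pose i := Ordinal lt_j3; have [_ bundle] := hb.
have -> : j = lshift 1 i by apply: val_inj.
rewrite /frame_form mulmx_tr_diag.
have -> : row (lshift 1 i) frame = row_mx (row i P) 0.
  by rewrite /frame -[block_mx _ _ _ _]/(col_mx _ _) rowKu row_row_mx row0.
rewrite qf_row_mx0; have -> : ulsubmx (mapL A : 'M_(3 + 1)) = extL L (restr_pi A).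
  by apply/matrixP => a b; rewrite !mxE; congr (in_alg L (A _ _)); apply: val_inj.
apply: bundle; split.
  apply/eqP => Pi0; have := mulmxK Pu (delta_mx 0 i : 'rV_3).
  rewrite -rowE Pi0 mul0mx => /matrixP/(_ 0 i); rewrite !mxE !eqxx => /eqP.
  by rewrite eq_sym oner_eq0.
exists (D 0 i); rewrite /extL map_trmx -row_mul hP row_mul row_diag_mx.
by rewrite -scalemxAl -rowE.
Qed.

Lemma frame_form_corner : frame_form 3 3 = in_alg L (qf A (ptT F)).
Proof.
rewrite qf_ptT /frame_form mulmx_tr_diag.
have -> : row 3 frame = row_mx (0 : 'rV_3) 1.
  rewrite (_ : (3 : 'I_(3 + 1)) = rshift 3 (0 : 'I_1)); last by apply/eqP.
  transitivity (row 0 (row_mx (0 : 'M_(1, 3)) (1%:M : 'M[L]_1))); first exact: rowKd.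
  by rewrite row_row_mx row0; congr row_mx; apply/rowP => j; rewrite !mxE ord1.
by rewrite qf_row_mx01 mxE.
Qed.

Lemma to_frame_col_mx m1 m2 (v1 : 'M[F]_(m1, 3 + 1)) (v2 : 'M[F]_(m2, 3 + 1)) :
  to_frame (col_mx v1 v2) = col_mx (to_frame v1) (to_frame v2).
Proof. by rewrite /to_frame map_col_mx mul_col_mx. Qed.

Lemma mxrank_to_frame m (v : 'M[F]_(m, 3 + 1)) : \rank (to_frame v) = \rank v.
Proof.
rewrite mxrankMfree ?mxrank_map // row_free_unit unitmxE det_lblock det1 mulr1.
by rewrite -unitmxE unitmx_inv.
Qed.

Lemma translate_rank_neq4 k (l : 'M[F]_(2, 4)) (p0 u0 : 'rV[F]_3) :
  p0 != 0 -> (col_mx (row_mx p0 0) (row_mx u0 1) :=: l)%MS ->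
  line_on A l -> line_on A (l *m (ext4 (s ^+ k))^T) ->
  \rank (l + l *m (ext4 (s ^+ k))^T)%MS != 4.
Proof.
move=> p0_neq0 eql onl onlG; set G := (ext4 (s ^+ k))^T.
set m := \row_i D 0 i ^+ k; set p := mapL p0 *m invmx P; set u := mapL u0 *m invmx P.
have on_frame v : (v <= l)%MS -> qf frame_form (to_frame v) = 0.
  by move/onl; rewrite qf_to_frame => ->; rewrite rmorph0.
have on_frameG v : (v <= l)%MS -> qf frame_form (to_frame (v *m G)) = 0.
  by move=> vl; rewrite qf_to_frame onlG ?rmorph0 // submxMr.
have : (col_mx (row_mx p0 0) (row_mx u0 1) <= l)%MS by rewrite eql.
rewrite col_mx_sub => /andP[l1 l2]; have l12 := addmx_sub l1 l2.
have e1 := on_frame _ l1; have e2 := on_frame _ l2; have e3 := on_frame _ l12.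
have e4 := on_frameG _ l1; have e5 := on_frameG _ l2; have e6 := on_frameG _ l12.
rewrite add_row_mx add0r in e3 e6.
rewrite !to_frame_row_mx map_mxD mulmxDl map_mx0 map_mx1 -/p -/u in e1 e2 e3.
rewrite !to_frame_translate map_mxD mulmxDl map_mx0 map_mx1 -/p -/u -/m in e4 e5 e6.
have := qf_translate_certificate (frame_form_diag (j := 0) erefl)
  (frame_form_diag (j := 1) erefl) (frame_form_diag (j := 2) erefl) e1 e2 e3 e4 e5 e6.
move=> /eqP; apply: contraLR; rewrite negbK => /eqP r4.
have p_neq0 := eigen_coord_neq0 Pu hP (singer_krylov_unit (singer_cycle_tr hs) p0_neq0).
rewrite frame_form_corner !mulf_neq0 ?fmorph_eq0 ?p_neq0 //.
apply: det_translate_frame_neq0; rewrite -r4 -(adds_eqmx eql (eqmxMr G eql)) addsmxE.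
rewrite -mxrank_to_frame to_frame_col_mx mul_col_mx !to_frame_col_mx !to_frame_row_mx.
by rewrite !to_frame_translate map_mx0 map_mx1.
Qed.

End EigenFrame.

Theorem proposition3p9 (F : finFieldType) (L : fieldExtType F)
  (hL : \dim {: L} = 3%N) (s : 'M[F]_3) (hs : singer_cycle s)
  (A : 'M[F]_4) (hA : in_H L s A) (hT : qf A (ptT F) != 0)
  (R : 'I_(#|F|.+1) -> 'M[F]_(2, 4)) (hR : regulus A R) :
  forall i j : 'I_(#|F|.+1), i != j -> ~ same_C_orbit s (R i) (R j).
Proof.
move=> i j ij [k /eqmxP RiG]; set G := (ext4 (s ^+ k))^T in RiG.
have [[li oi] [lj oj]] := (hR.1 i, hR.1 j).
have oiG : line_on A (R i *m G) by move=> v; rewrite RiG; exact: oj.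
have rG : \rank (R i *m G) = 2 by rewrite RiG.
have r4 : \rank (R i + R i *m G)%MS = 4.
  by apply: skew_lines_rank li rG _; rewrite (cap_eqmx (eqmx_refl _) RiG); exact: hR.2.
have off_plane : rsubmx (R i : 'M_(2, 3 + 1)) != 0.
  move/eqP: r4; apply: contraTneq => Ri_r0; rewrite neq_ltn ltnS; apply/orP; left.
  by apply: (rank_adds_in_hyperplane (n := 3)) => //; rewrite rsubmx_mul_ext4_tr.
have [p0 [u0 [p0_neq0 eqRi]]] := line_basis_off_plane (l := R i : 'M_(2, 3 + 1)) li off_plane.
have sX : s^T ^+ (#|F| ^ \dim {: L}) = s^T.
  by rewrite hL; exact: singer_expX_card (singer_cycle_tr hs).
have [P [D [Pu hP]]] := eigenbasis_of_expX_card sX.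
by move: (translate_rank_neq4 Pu hP hs hA.2 hT p0_neq0 eqRi oi oiG); rewrite -/G r4.
Qed.
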